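(* For all $n\ge0$, $$\prod_{i=1}^n(1+q^i)=F_{n+1}(q)+\sum_{k=0}^{n-2}q^kF_k(q)\prod_{i=k+3}^n(1+q^i),$$ where an empty product equals $1$.
   Context: $\Pi_n(13/2,123)$ is the set of layered matchings of $[n]$: set partitions whose blocks are consecutive intervals $[1,i_1]/\dots/[i_{k-1}+1,n]$, each of size $1$ or $2$. $\Pi_0(13/2,123)$ consists of the empty partition. For $\pi=B_1/\dots/B_k$ with $\min B_1<\dots<\min B_k$, $rb(\pi)$ is the number of pairs $(b,B_j)$ with $b\in B_i$, $j>i$, $\max B_j>b$. Define $F_n(q)=\sum_{\pi\in\Pi_n(13/2,123)}q^{rb(\pi)}$, so $F_0(q)=F_1(q)=1$. *)

From HB Require Import structures.
From mathcomp Require Import all_boot all_order all_algebra.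
Set Implicit Arguments. Unset Strict Implicit. Unset Printing Implicit Defensive.
Import Order.TTheory GRing.Theory Num.Theory.

(* Layered matchings of [n] = set partitions [1,i_1]/[i_1+1,i_2]/.../[i_{k-1}+1,n]
   into consecutive intervals of size 1 or 2.  Such a partition is determined by
   its sequence of block sizes, a composition of n with parts in {1,2}. *)

Fixpoint comps12 (n : nat) : seq (seq nat) :=
  match n with
  | 0 => [:: [::]]
  | S m1 =>
      match m1 with
      | 0 => [:: [:: 1]]
      | S m => map (cons 1) (comps12 m1) ++ map (cons 2) (comps12 m)
      end
  end.

Fixpoint blocks_from (s : nat) (c : seq nat) : seq (seq nat) :=
  match c with
  | [::] => [::]
  | m :: c' => iota s m :: blocks_from (s + m) c'
  end.

(* Pi_n(13/2,123): layered matchings of [n] = {1..n}, each given as its list of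
   blocks B_1, ..., B_k ordered by increasing minimum. *)
Definition layered_matchings (n : nat) : seq (seq (seq nat)) :=
  map (blocks_from 1) (comps12 n).

Fixpoint rb (bs : seq (seq nat)) : nat :=
  match bs with
  | [::] => 0
  | B :: bs' =>
      (\sum_(b <- B) count (fun C : seq nat => b < \max_(x <- C) x) bs') + rb bs'
  end.

Local Open Scope ring_scope.

Definition F (n : nat) : {poly int} :=
  \sum_(pi <- layered_matchings n) 'X^(rb pi).

From HB Require Import structures.
From mathcomp Require Import all_boot all_order all_algebra ring.
Import GRing.Theory.

(* A layered matching is determined by its composition c = (c_1,...,c_k) of
   block sizes.  An element of block i lies below the maximum of every later
   block, so rb(pi) = sum_i c_i * (k - i) =: size_rb c.
   [comps12 n] lists each {1,2}-composition of n exactly once, so the list is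
   stable under reversal, and F_n = sum_c q^(size_rb (rev c)).  The first part
   m of c is the LAST block of rev c, and every one of the n - m elements
   before it lies below its maximum; this gives the recurrence
       F_{m+2} = q^{m+1} F_{m+1} + q^m F_m,
   whence the "step" identity  F_{m+2}(1 + q^{m+2}) = F_{m+3} + q^m F_m.
   The theorem follows by induction on n: multiplying the identity for n by
   (1 + q^{n+1}) extends every product in the sum, and the step identity turns
   the leading term into F_{n+2} plus the new summand k = n-1. *)

(* rb of the interval partition with block sizes c: each element of block i
   is counted once for every later block. *)
Fixpoint size_rb (c : seq nat) : nat :=
  match c with [::] => 0 | m :: c' => m * size c' + size_rb c' end.

Definition parts12 (c : seq nat) : bool := all (fun x => (x == 1) || (x == 2)) c.

Lemma parts12_pos (c : seq nat) : parts12 c -> all (fun x => 0 < x) c.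
Proof. by apply: sub_all => x /orP[] /eqP ->. Qed.

Lemma max_iota_ge (s m : nat) : 0 < m -> s <= \max_(x <- iota s m) x.
Proof.
move=> m_gt0; apply: (@leq_bigmax_seq _ _ xpredT id) => //.
by rewrite mem_iota leqnn /= -{1}(addn0 s) ltn_add2l.
Qed.

Lemma count_blocks_below (s b : nat) (c : seq nat) :
  all (fun x => 0 < x) c -> b < s ->
  count (fun C : seq nat => b < \max_(x <- C) x) (blocks_from s c) = size c.
Proof.
elim: c s => [//|m c IH] s /= /andP[m_gt0 c_pos] b_lt_s.
rewrite (leq_trans b_lt_s (max_iota_ge s _ m_gt0)) IH //.
exact: leq_trans b_lt_s (leq_addr m s).
Qed.

Lemma rb_blocks_from (s : nat) (c : seq nat) :
  all (fun x => 0 < x) c -> rb (blocks_from s c) = size_rb c.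
Proof.
elim: c s => [//|m c IH] s /= /andP[m_gt0 c_pos].
rewrite IH // big_seq (eq_bigr (fun _ => size c)) => [|b].
  by rewrite -big_seq big_const_seq count_predT size_iota iter_addn_0 mulnC.
by rewrite mem_iota => /andP[_ b_lt]; apply: count_blocks_below.
Qed.

(* Appending a last part gives every earlier part one more later block, so
   each part x of d contributes x more. *)
Lemma size_rb_rcons (d : seq nat) (m : nat) :
  size_rb (rcons d m) = size_rb d + sumn d.
Proof.
elim: d => [|x d IH] /=; first by rewrite muln0.
by rewrite IH size_rcons mulnS; ring.
Qed.

Lemma comps12_SS (m : nat) :
  comps12 m.+2 = map (cons 1) (comps12 m.+1) ++ map (cons 2) (comps12 m).
Proof. by []. Qed.

Lemma mem_map_cons (a x : nat) (c : seq nat) (s : seq (seq nat)) :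
  (x :: c \in map (cons a) s) = (x == a) && (c \in s).
Proof.
elim: s => [|d s IH] /=; first by rewrite andbF.
by rewrite !in_cons IH eqseq_cons andb_orr.
Qed.

Lemma mem_comps12 (n : nat) (c : seq nat) :
  (c \in comps12 n) = parts12 c && (sumn c == n).
Proof.
have base0 d : (d \in comps12 0) = parts12 d && (sumn d == 0).
  by case: d => [|[|[|[|x]]] d] //=; rewrite andbF.
have base1 d : (d \in comps12 1) = parts12 d && (sumn d == 1).
  case: d => [|[|[|[|x]]] d] //=; rewrite ?andbF // in_cons eqseq_cons /=.
  by case: d => [|[|y] d] //=; rewrite andbF.
suff: forall d, ((d \in comps12 n) = parts12 d && (sumn d == n)) /\
                ((d \in comps12 n.+1) = parts12 d && (sumn d == n.+1)).
  by move=> all_d; case: (all_d c).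
elim: n => [|n IH] d; first by split; [exact: base0 | exact: base1].
split; first by case: (IH d).
rewrite comps12_SS mem_cat.
case: d => [|x d]; first by apply/negbTE/negP => /orP[] /mapP[].
rewrite !mem_map_cons; case: (IH d) => -> ->.
by case: x => [|[|[|x]]]; rewrite /parts12 /= ?orbF ?andbF ?add1n ?add2n.
Qed.

(* No composition is listed twice: the two halves differ in the first part. *)
Lemma uniq_comps12 (n : nat) : uniq (comps12 n).
Proof.
suff: uniq (comps12 n) && uniq (comps12 n.+1) by case/andP.
elim: n => [//|n /andP[uniq_n uniq_n1]]; rewrite uniq_n1 andTb.
have cons_inj (a : nat) : injective (cons a) by move=> x y [].
rewrite comps12_SS cat_uniq !map_inj_uniq // uniq_n uniq_n1 andbT /=.
by apply/hasPn => _ /mapP[d _ ->]; rewrite mem_map_cons.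
Qed.

Lemma perm_rev_comps12 (n : nat) : perm_eq (map rev (comps12 n)) (comps12 n).
Proof.
apply: uniq_perm; rewrite ?map_inj_uniq ?uniq_comps12 //; first exact: (can_inj revK).
move=> c; rewrite -{1}(revK c) (mem_map (can_inj revK)) !mem_comps12.
by rewrite /parts12 all_rev sumn_rev.
Qed.

Local Open Scope ring_scope.

(* F_n read off the reversed compositions, so that peeling off the first
   part of c removes the last block of the matching. *)
Lemma F_rev (n : nat) : F n = \sum_(c <- comps12 n) 'X^(size_rb (rev c)).
Proof.
rewrite -(perm_big _ (perm_rev_comps12 n)) big_map /F /layered_matchings big_map.
rewrite big_seq [RHS]big_seq; apply: eq_bigr => c.
by rewrite mem_comps12 => /andP[/parts12_pos c_pos _]; rewrite rb_blocks_from ?revK.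
Qed.

Lemma F0 : F 0 = 1.
Proof. by rewrite /F big_seq1. Qed.

Lemma F1 : F 1 = 1.
Proof. by rewrite /F big_seq1 (@rb_blocks_from 1 [:: 1%N]). Qed.

(* Fibonacci-type recurrence: a last block of size 1 (resp. 2) lies above all
   m+1 (resp. m) elements before it. *)
Lemma F_SS (m : nat) : F m.+2 = 'X^(m.+1) * F m.+1 + 'X^m * F m.
Proof.
rewrite !F_rev comps12_SS big_cat !big_map !mulr_sumr.
congr (_ + _); rewrite big_seq [RHS]big_seq; apply: eq_bigr => c;
  rewrite mem_comps12 => /andP[_ /eqP sum_c];
  by rewrite rev_cons size_rb_rcons sumn_rev sum_c -exprD addnC.
Qed.

(* Two applications of the recurrence: the leading term of the theorem for n,
   times the new factor, yields the leading term for n+1 plus one new summand. *)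
Lemma F_step (m : nat) : F m.+2 * (1 + 'X^(m.+2)) = F m.+3 + 'X^m * F m.
Proof. by rewrite (F_SS m.+1) (F_SS m); ring. Qed.

Theorem theorem4p8 (n : nat) :
  \prod_(1 <= i < n.+1) (1 + 'X^i : {poly int}) =
  F n.+1 + \sum_(0 <= k < (n - 1)%N)
             'X^k * F k * \prod_(k.+3 <= i < n.+1) (1 + 'X^i).
Proof.
elim: n => [|[|p] IH].
- by rewrite !big_geq // F1 addr0.
- by rewrite big_nat1 big_geq // addr0 (F_SS 0) F1 F0 !mulr1 addrC.
- rewrite subn1 /= big_nat_recr //= IH subn1 /= mulrDl F_step.
  rewrite [in RHS]big_nat_recr //= [\prod_(p.+3 <= i < p.+3) _]big_geq // mulr1.
  have extend_sum :
      \sum_(0 <= k < p) 'X^k * F k * \prod_(k.+3 <= i < p.+3) (1 + 'X^i) =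
      (\sum_(0 <= k < p) 'X^k * F k * \prod_(k.+3 <= i < p.+2) (1 + 'X^i))
        * (1 + 'X^(p.+2)) :> {poly int}.
    rewrite mulr_suml; apply: eq_big_nat => k /andP[_ lt_kp].
    by rewrite big_nat_recr /= ?mulrA // !ltnS ltnW.
  by rewrite extend_sum addrAC addrA.
Qed.
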